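(* Let $H$ be a real Hilbert space, let $D\subseteq H$ be a nonempty closed convex set, and let $T_1,\dots,T_m:D\to D$ be firmly nonexpansive operators with $F:=\bigcap_{i=1}^m\mathrm{Fix}(T_i)\neq\emptyset$. Let $\mathcal{M}'$ be a finite nonempty subset of $\mathcal{M}$, enumerated as $S_1,\dots,S_N$ with $N=|\mathcal{M}'|$ and $S_r=(\Omega_r,w_r)$. Let $j(k)=(k \bmod N)+1$ for $k\ge0$, let $(\lambda_k)_{k\in\mathbb{N}}$ be a steering sequence, and let $u,x^0\in D$. Then the sequence defined by $$x^{k+1}=\lambda_k u+(1-\lambda_k)\sum_{t\in\Omega_{j(k)}}w_{j(k)}(t)T[t](x^k),\quad k\ge0,$$ converges strongly to $P_F(u)$.
   Context: An operator $T:D\to H$ is firmly nonexpansive if $\|T(x)-T(y)\|^2\le\langle x-y,T(x)-T(y)\rangle$ for all $x,y\in D$. $\mathrm{Fix}(T)=\{x\in D: T(x)=x\}$; $P_F$ is the metric projection onto $F$. An index vector is a finite tuple $t=(t_1,\dots,t_q)$ with each $t_\ell\in\{1,\dots,m\}$; the string operator is $T[t]:=T_{t_q}T_{t_{q-1}}\cdots T_{t_1}$. A finite set $\Omega$ of index vectors is fit if every $i\in\{1,\dots,m\}$ appears as a component of some $t\in\Omega$. $\mathcal{M}$ denotes the collection of all pairs $(\Omega,w)$ where $\Omega$ is a fit finite set of index vectors and $w:\Omega\to(0,1]$ satisfies $\sum_{t\in\Omega}w(t)=1$. A steering sequence is a real sequence $(\lambda_k)_{k\in\mathbb{N}}$ with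 $\lambda_k\in[0,1]$ for all $k$, $\lim_{k\to\infty}\lambda_k=0$, $\sum_{k=0}^\infty\lambda_k=+\infty$, and $\sum_{k=0}^\infty|\lambda_{k+1}-\lambda_k|<\infty$. *)

From HB Require Import structures.
From mathcomp Require Import all_boot all_order all_algebra.
From mathcomp Require Import all_classical all_reals all_analysis.
Set Implicit Arguments. Unset Strict Implicit. Unset Printing Implicit Defensive.
Import Order.TTheory GRing.Theory Num.Theory.
Import numFieldNormedType.Exports.
Local Open Scope classical_set_scope.
Local Open Scope ring_scope.

(* A real inner product on V compatible with the norm of V: together with the
   completeness of V this makes V a real Hilbert space. *)
Definition is_inner_product (R : realType) (V : normedModType R)
  (ip : V -> V -> R) : Prop :=
  [/\ (forall x y, ip x y = ip y x),
      (forall (a : R) (x y z : V), ip (a *: x + y) z = a * ip x z + ip y z)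
    & (forall x, `|x| ^+ 2 = ip x x)].

Definition convex_set_of (R : realType) (V : normedModType R) (D : set V) :=
  forall x y, D x -> D y -> forall a : R, 0 <= a <= 1 ->
    D (a *: x + (1 - a) *: y).

Definition firmly_nonexpansive (R : realType) (V : normedModType R)
  (ip : V -> V -> R) (D : set V) (T : V -> V) : Prop :=
  (forall x, D x -> D (T x)) /\
  forall x y, D x -> D y -> `|T x - T y| ^+ 2 <= ip (x - y) (T x - T y).

Definition Fix (R : realType) (V : normedModType R) (D : set V) (T : V -> V) :
  set V := [set x | D x /\ T x = x].

(* index vectors t = (t_1,...,t_q) with entries in {1..m}, represented as
   seq 'I_m (entry i : 'I_m stands for i+1). String operator
   T[t] = T_{t_q} ... T_{t_1}  (t_1 applied first). *)
Definition string_op (R : realType) (V : normedModType R) (m : nat)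
  (T : 'I_m -> V -> V) (t : seq 'I_m) (x : V) : V :=
  foldl (fun y i => T i y) x t.

Definition in_M (R : realType) (m : nat) (Omega : seq (seq 'I_m))
  (w : seq 'I_m -> R) : Prop :=
  [/\ uniq Omega,
      (forall i : 'I_m, exists2 t, t \in Omega & i \in t),
      (forall t, t \in Omega -> 0 < w t <= 1)
    & \sum_(t <- Omega) w t = 1].

Definition steering (R : realType) (lam : nat -> R) : Prop :=
  [/\ (forall k, 0 <= lam k <= 1),
      lam @ \oo --> (0 : R),
      series lam @ \oo --> +oo
    & cvg (series (fun k => `|lam k.+1 - lam k|) @ \oo)].

Definition is_metric_proj (R : realType) (V : normedModType R) (F : set V)
  (u p : V) : Prop :=
  F p /\ forall y, F y -> `|u - p| <= `|u - y|.

From HB Require Import structures.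
From mathcomp Require Import all_boot all_order all_algebra.
From mathcomp Require Import all_classical all_reals all_analysis.
From mathcomp Require Import ring lra zify.
Set Implicit Arguments. Unset Strict Implicit. Unset Printing Implicit Defensive.
Import Order.TTheory GRing.Theory Num.Theory.
Import numFieldNormedType.Exports.
Local Open Scope classical_set_scope.
Local Open Scope ring_scope.

(* The proof follows the Halpern-Wittmann-Xu scheme, organized around one
   class of operators, [strict_qne D F S]: self-maps of D that are
   nonexpansive, quasi-nonexpansive w.r.t. F, and strictly so.
   1. Inner-product algebra, Cauchy-Schwarz, Xu's lemma on recursive real
      inequalities, and elementary facts on sequences.
   2. The class is closed under composition, and every averaged string
      operator U_r belongs to it (firm nonexpansiveness of the T_i and
      fitness of Omega_r).
   3. Browder: for S in the class, the curve z_t = t u + (1 - t) S z_t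
      converges as t -> 0 to the point p of F satisfying the variational
      inequality <u - p, f - p> <= 0 for f in F, i.e. p = P_F(u); in
      quantitative form, |S y - y| small forces <u - p, y - p> small.
   4. For an N-periodic family of operators in the class, the iteration is
      bounded and asymptotically regular (|x_(k+N) - x_k| -> 0, by Xu's
      lemma), hence |x_k - V_k x_k| -> 0 for the composition V_k of one
      period; step 3 applied to the N compositions gives
      limsup <u - p, x_k - p> <= 0, and Xu's lemma applied to |x_k - p|^2
      gives x_k -> p.
   The theorem instantiates step 4 with the operators U_(k mod N). *)

Lemma subr_swap (V : zmodType) (a b c d : V) :
  (a - b) - (c - d) = (a - c) - (b - d).
Proof. by rewrite !opprB [LHS]addrACA [RHS]addrACA [- b + _]addrC. Qed.

Section AffineCombinations.
Variables (R : comRingType) (V : lmodType R).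

Lemma lin_comb (t : R) (a b y : V) :
  t *: (a - y) + (1 - t) *: (b - y) = t *: a + (1 - t) *: b - y.
Proof.
by rewrite !scalerBr addrACA -opprD -scalerDl [t + _]addrC subrK scale1r.
Qed.

Lemma lincomb_diff (a b : R) (u v : V) :
  (a *: u + (1 - a) *: v) - (b *: u + (1 - b) *: v) = (a - b) *: (u - v).
Proof.
rewrite opprD addrACA -!scalerBl.
have -> : (1 - a) - (1 - b) = - (a - b) by ring.
by rewrite scaleNr -scalerBr.
Qed.

Lemma lincomb_same (c : R) (u v w : V) :
  (u + c *: v) - (u + c *: w) = c *: (v - w).
Proof. by rewrite opprD addrACA subrr add0r -scalerBr. Qed.

End AffineCombinations.

Section InnerProduct.
Variables (R : realType) (V : normedModType R) (ip : V -> V -> R).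
Hypothesis hip : is_inner_product ip.

Lemma ipC x y : ip x y = ip y x. Proof. by case: hip. Qed.

Lemma ipL a x y z : ip (a *: x + y) z = a * ip x z + ip y z.
Proof. by case: hip. Qed.

Lemma ip_norm x : `|x| ^+ 2 = ip x x. Proof. by case: hip. Qed.

Lemma ip0l z : ip 0 z = 0.
Proof. by have := ipL 1 0 0 z; rewrite scaler0 addr0 mul1r; lra. Qed.

Lemma ipDl x y z : ip (x + y) z = ip x z + ip y z.
Proof. by rewrite -{1}(scale1r x) ipL mul1r. Qed.

Lemma ipZl a x z : ip (a *: x) z = a * ip x z.
Proof. by rewrite -(addr0 (a *: x)) ipL ip0l addr0. Qed.

Lemma ipNl x z : ip (- x) z = - ip x z.
Proof. by rewrite -scaleN1r ipZl mulN1r. Qed.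

Lemma ipBl x y z : ip (x - y) z = ip x z - ip y z.
Proof. by rewrite ipDl ipNl. Qed.

Lemma ipDr x y z : ip z (x + y) = ip z x + ip z y.
Proof. by rewrite ipC ipDl !(ipC z). Qed.

Lemma ipNr x z : ip z (- x) = - ip z x.
Proof. by rewrite ipC ipNl ipC. Qed.

Lemma ipBr x y z : ip z (x - y) = ip z x - ip z y.
Proof. by rewrite ipDr ipNr. Qed.

Lemma normB2 x y : `|x - y| ^+ 2 = `|x| ^+ 2 - 2 * ip x y + `|y| ^+ 2.
Proof. by rewrite !ip_norm ipBl !ipBr (ipC y x); ring. Qed.

(* Cauchy-Schwarz inequality, by expanding |y - a x|^2 >= 0 at the optimal
   a = <x, y> / |x|^2. *)
Lemma cauchy_schwarz x y : ip x y <= `|x| * `|y|.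
Proof.
have [->|xn0] := eqVneq x 0; first by rewrite ip0l normr0 mul0r.
have x0 : 0 < `|x| ^+ 2 by rewrite exprn_gt0 // normr_gt0.
have := sqr_ge0 `|y - (ip x y / `|x| ^+ 2) *: x|.
rewrite normB2 normrZ exprMn real_normK ?num_real // ipC ipZl.
have -> : `|y| ^+ 2 - 2 * (ip x y / `|x| ^+ 2 * ip x y)
          + (ip x y / `|x| ^+ 2) ^+ 2 * `|x| ^+ 2
        = (`|x| ^+ 2 * `|y| ^+ 2 - ip x y ^+ 2) / `|x| ^+ 2.
  by field; rewrite ?gt_eqF ?normr_gt0 // ?(gt_eqF x0).
rewrite pmulr_lge0 ?invr_gt0 // subr_ge0 -exprMn => h.
have := mulr_ge0 (normr_ge0 x) (normr_ge0 y); nra.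
Qed.

Lemma abs_cauchy_schwarz x y : `|ip x y| <= `|x| * `|y|.
Proof.
have := cauchy_schwarz x y; have := cauchy_schwarz (- x) y.
by rewrite ipNl normrN ler_norml => h1 h2; apply/andP; split; lra.
Qed.

Lemma norm_sqrD_le a b : `|a + b| ^+ 2 <= `|a| ^+ 2 + 2 * ip b (a + b).
Proof.
have := sqr_ge0 `|b|; rewrite !ip_norm !ipDr !ipDl (ipC a b); lra.
Qed.

Lemma vi_unique (u p q : V) :
  ip (u - p) (q - p) <= 0 -> ip (u - q) (p - q) <= 0 -> p = q.
Proof.
move=> hp hq; apply/esym/subr0_eq/normr0_eq0/eqP.
rewrite -sqrf_eq0 eq_le sqr_ge0 andbT ip_norm.
have e : q - p = (u - p) - (u - q) by rewrite opprB [RHS]addrC addrA subrK.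
by rewrite {1}e ipBl -{2}(opprB p q) ipNr; lra.
Qed.

(* If |a| <= |d| then <d - a, d> >= 0: applied to d = y - y', a = S y - S y'
   this is the monotonicity of I - S for nonexpansive S. *)
Lemma ip_sub_ge0 a d : `|a| <= `|d| -> 0 <= ip (d - a) d.
Proof.
move=> ad; rewrite ipBl -ip_norm.
have := cauchy_schwarz a d; have := normr_ge0 a; nra.
Qed.

Lemma ip_shift_le u y q z :
  ip (u - q) (y - q) <= ip (u - z) (y - z) + `|z - q| * (`|y - q| + `|u - z|).
Proof.
have e1 : u - q = (z - q) + (u - z) by rewrite [RHS]addrC addrA subrK.
have e2 : y - q = (y - z) + (z - q) by rewrite addrA subrK.
rewrite {1}e1 ipDl {2}e2 (ipDr (y - z)).
have := cauchy_schwarz (z - q) (y - q).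
have := cauchy_schwarz (u - z) (z - q); lra.
Qed.

Lemma halpern_step (l : R) (u A y p : V) : 0 <= l <= 1 -> `|A - p| <= `|y - p| ->
  `|l *: u + (1 - l) *: A - p| ^+ 2 <=
    (1 - l) * `|y - p| ^+ 2 + l * (2 * ip (u - p) (l *: u + (1 - l) *: A - p)).
Proof.
move=> /andP [l0 l1] hA; set v := _ - p.
have ev : v = (1 - l) *: (A - p) + l *: (u - p) by rewrite addrC lin_comb.
have := norm_sqrD_le ((1 - l) *: (A - p)) (l *: (u - p)).
rewrite -ev ipZl normrZ ger0_norm ?subr_ge0 // exprMn.
have : `|A - p| ^+ 2 <= `|y - p| ^+ 2 by rewrite ler_pXn2r ?nnegrE.
have l1' : 0 <= 1 - l by rewrite subr_ge0.
have := mulr_ge0 (mulr_ge0 l0 l1') (sqr_ge0 `|A - p|); nra.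
Qed.

End InnerProduct.

Section XuLemma.
Variable R : realFieldType.

Lemma prod_one_sub_le (g : nat -> R) K i :
  (forall k, 0 <= g k <= 1) ->
  \prod_(K <= k < K + i) (1 - g k) <= 1 / (1 + \sum_(K <= k < K + i) g k).
Proof.
move=> hg; elim: i => [|i IH]; first by rewrite addn0 !big_geq // addr0 divr1.
rewrite addnS !big_nat_recr ?leq_addr //=.
set P := \prod_(_ <= _ < _) _ in IH *; set S := \sum_(_ <= _ < _) _ in IH *.
have S0 : 0 <= S by apply: sumr_ge0 => k _; case/andP: (hg k).
have P0 : 0 <= P.
  by apply: prodr_ge0 => k _; case/andP: (hg k) => _; rewrite subr_ge0.
have /andP [c0 c1] := hg (K + i)%N.
apply: (le_trans (y := 1 / (1 + S) * (1 - g (K + i)%N))).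
  by apply: ler_wpM2r; rewrite ?subr_ge0.
rewrite mul1r ler_pdivrMl ?ltr_wpDr // div1r ler_pdivlMr ?ltr_wpDr ?addr_ge0 //.
nra.
Qed.

Lemma xu_unrolled (a g d b : nat -> R) (c : R) K :
  (forall k, 0 <= g k <= 1) -> (forall k, 0 <= b k) -> 0 <= c ->
  (forall k, (K <= k)%N -> d k <= c) ->
  (forall k, a k.+1 <= (1 - g k) * a k + g k * d k + b k) ->
  forall i, a (K + i)%N <= c + \sum_(K <= k < K + i) b k
                           + \prod_(K <= k < K + i) (1 - g k) * a K.
Proof.
move=> hg b0 c0 hd rec; elim=> [|i IH].
  by rewrite addn0 !big_geq // mul1r addr0 lerDr.
rewrite addnS !big_nat_recr ?leq_addr //=; apply: (le_trans (rec _)).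
have /andP [g0 g1] := hg (K + i)%N; have hdi := hd (K + i)%N (leq_addr _ _).
set S := \sum_(_ <= _ < _) _ in IH *; set P := \prod_(_ <= _ < _) _ in IH *.
have S0 : 0 <= S by apply: sumr_ge0.
have := ler_wpM2l (x := 1 - g (K + i)%N) _ IH; rewrite subr_ge0 => /(_ g1) h1.
have := ler_wpM2l g0 hdi; have := b0 (K + i)%N; nra.
Qed.

(* Xu's lemma: a nonnegative sequence with
   a_{k+1} <= (1 - g_k) a_k + g_k d_k + b_k tends to 0 when sum g_k = +oo,
   limsup d_k <= 0 and sum b_k < +oo (all stated quantitatively). *)
Lemma xu_lemma (a g d b : nat -> R) :
  (forall k, 0 <= a k) -> (forall k, 0 <= g k <= 1) ->
  (forall K M, exists i, M <= \sum_(K <= k < K + i) g k) ->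
  (forall e, 0 < e -> exists K, forall k, (K <= k)%N -> d k <= e) ->
  (forall k, 0 <= b k) ->
  (forall e, 0 < e -> exists K, forall m n, (K <= m)%N ->
     \sum_(m <= k < n) b k <= e) ->
  (forall k, a k.+1 <= (1 - g k) * a k + g k * d k + b k) ->
  forall e, 0 < e -> exists K, forall n, (K <= n)%N -> a n <= e.
Proof.
move=> a0 hg gdiv hd b0 hb rec e e0.
have e30 : 0 < e / 3 by rewrite divr_gt0.
have [K1 hK1] := hd _ e30; have [K2 hK2] := hb _ e30.
pose K := maxn K1 K2.
have unrolled := xu_unrolled hg b0 (ltW e30)
  (fun k Kk => hK1 k (leq_trans (leq_maxl K1 K2) Kk)) rec.
have [i0 hi0] := gdiv K (a K / (e / 3)).
exists (K + i0)%N => n Kn; have -> : n = (K + (n - K))%N by lia.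
apply: (le_trans (unrolled _)).
have hS : \sum_(K <= k < K + (n - K)) b k <= e / 3.
  by apply: hK2; rewrite leq_maxr.
suff : \prod_(K <= k < K + (n - K)) (1 - g k) * a K <= e / 3 by lra.
apply: (le_trans (ler_wpM2r (a0 K) (prod_one_sub_le K (n - K) hg))).
have mono : \sum_(K <= k < K + i0) g k <= \sum_(K <= k < K + (n - K)) g k.
  rewrite [X in _ <= X](@big_cat_nat _ _ _ (K + i0)%N) /=; [|lia|lia].
  by rewrite lerDl; apply: sumr_ge0 => k _; case/andP: (hg k).
set S := \sum_(_ <= _ < K + (n - K)) _ in mono *.
have S0 : 0 <= S by apply: sumr_ge0 => k _; case/andP: (hg k).
rewrite mul1r mulrC ler_pdivrMr ?ltr_wpDr //.
have : a K / (e / 3) <= S by apply: le_trans mono.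
rewrite ler_pdivrMr //; nra.
Qed.

End XuLemma.

Section Sequences.
Variable R : realType.

Lemma near_oo_exists (P : nat -> Prop) :
  (\forall n \near \oo, P n) -> exists K, forall n, (K <= n)%N -> P n.
Proof. by move=> [K _ hK]; exists K => n Kn; apply: hK. Qed.

Lemma exists_near_oo (P : nat -> Prop) :
  (exists K, forall n, (K <= n)%N -> P n) -> \forall n \near \oo, P n.
Proof. by move=> [K hK]; exists K => // n /= Kn; apply: hK. Qed.

Lemma cvg_eventually_le (V : normedModType R) (x : nat -> V) (p : V) :
  x @ \oo --> p ->
  forall e, 0 < e -> exists K, forall n, (K <= n)%N -> `|x n - p| <= e.
Proof.
move/cvgrPdist_le => h e e0; have [K hK] := near_oo_exists (h e e0).
by exists K => n Kn; rewrite distrC; apply: hK.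
Qed.

Lemma eventually_le_cvg (V : normedModType R) (x : nat -> V) (p : V) :
  (forall e, 0 < e -> exists K, forall n, (K <= n)%N -> `|x n - p| <= e) ->
  x @ \oo --> p.
Proof.
move=> h; apply/cvgrPdist_le => e e0; apply: exists_near_oo.
by have [K hK] := h e e0; exists K => n Kn; rewrite distrC; apply: hK.
Qed.

Lemma cauchy_seq_cvg (V : completeNormedModType R) (z : nat -> V) :
  (forall e, 0 < e -> exists K, forall n, (K <= n)%N -> `|z K - z n| <= e) ->
  exists p : V, z @ \oo --> p.
Proof.
move=> h; suff : cvgn z by exists (limn z).
apply/cauchy_cvgP/cauchy_exP => e e0.
have [K hK] := h (e / 2) (divr_gt0 e0 (ltr0Sn _ 1)).
exists (z K); apply: exists_near_oo; exists K => n Kn.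
rewrite -ball_normE /ball /=; apply: (le_lt_trans (hK n Kn)).
by rewrite ltr_pdivrMr // ltr_pMr // ltr1n.
Qed.

Lemma divergent_series_block (g : nat -> R) :
  series g @ \oo --> +oo ->
  forall K M, exists i, M <= \sum_(K <= k < K + i) g k.
Proof.
move/cvgryPge => h K M; have [n0 hn0] := near_oo_exists (h (M + series g K)).
exists n0; have := hn0 (K + n0)%N (leq_addl _ _).
rewrite /series /= (@big_cat_nat _ _ _ K 0 (K + n0)) ?leq_addr //=; lra.
Qed.

Lemma cvg_series_tail (d : nat -> R) :
  (forall k, 0 <= d k) -> cvg (series d @ \oo) ->
  forall e, 0 < e -> exists K, forall m n, (K <= m)%N ->
    \sum_(m <= k < n) d k <= e.
Proof.
move=> d0 /cvg_ex [l hl] e e0.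
have [K hK] := cvg_eventually_le hl (divr_gt0 e0 (ltr0Sn _ 1)).
exists K => m n Km.
have [mn|nm] := leqP m n; last by rewrite big_geq; [apply: ltW|apply: ltnW].
have : \sum_(m <= k < n) d k = series d n - series d m.
  by rewrite /series /= (@big_cat_nat _ _ _ m 0 n) //=; ring.
move=> ->; move: (hK m Km) (hK n (leq_trans Km mn)).
by rewrite !ler_norml => /andP[? ?] /andP[? ?]; lra.
Qed.

Lemma sum_ord_le (n : nat) (G : 'I_n -> R) c :
  (forall i, G i <= c) -> \sum_(i < n) G i <= n%:R * c.
Proof.
move=> h; apply: le_trans (_ : \sum_(i < n) c <= _).
  by apply: ler_sum => i _; apply: h.
by rewrite sumr_const card_ord mulr_natl.
Qed.

Lemma telescope_le (lam : nat -> R) k n :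
  `|lam (k + n)%N - lam k| <= \sum_(i < n) `|lam (k + i).+1 - lam (k + i)%N|.
Proof.
elim: n => [|n IH]; first by rewrite addn0 subrr normr0 big_ord0.
rewrite big_ord_recr /= addnS.
have -> : lam (k + n).+1 - lam k =
    (lam (k + n).+1 - lam (k + n)%N) + (lam (k + n)%N - lam k).
  by rewrite addrA subrK.
by apply: le_trans (ler_normD _ _) _; rewrite addrC lerD.
Qed.

End Sequences.

Lemma eventually_uniform (N : nat) (P : nat -> nat -> Prop) :
  (forall r K K', (K <= K')%N -> P r K -> P r K') ->
  (forall r, (r < N)%N -> exists K, P r K) ->
  exists K, forall r, (r < N)%N -> P r K.
Proof.
move=> mono; elim: N => [|N IH] h; first by exists 0%N.
have [K1 hK1] := IH (fun r rN => h r (ltnW rN)).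
have [K2 hK2] := h N (ltnSn N).
exists (maxn K1 K2) => r; rewrite ltnS leq_eqVlt => /orP [/eqP ->|rN].
  exact: mono (leq_maxr K1 K2) hK2.
exact: mono (leq_maxl K1 K2) (hK1 r rN).
Qed.

Section StrictQNE.
Variables (R : realType) (V : normedModType R).

Definition strict_qne (D F : set V) (S : V -> V) : Prop :=
  [/\ forall y, D y -> D (S y),
      forall y y', D y -> D y' -> `|S y - S y'| <= `|y - y'|,
      forall y f, D y -> F f -> `|S y - f| <= `|y - f|
    & forall y f, D y -> F f -> `|y - f| <= `|S y - f| -> F y].

Lemma strict_qne_comp (D F : set V) (S1 S2 : V -> V) :
  strict_qne D F S1 -> strict_qne D F S2 -> strict_qne D F (S2 \o S1).
Proof.
move=> [D1 ne1 qn1 st1] [D2 ne2 qn2 st2]; split=> /=.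
- by move=> y Dy; apply/D2/D1.
- move=> y y' Dy Dy'.
  exact: le_trans (ne2 _ _ (D1 _ Dy) (D1 _ Dy')) (ne1 _ _ Dy Dy').
- by move=> y f Dy Ff; apply: le_trans (qn2 _ _ (D1 _ Dy) Ff) (qn1 _ _ Dy Ff).
- move=> y f Dy Ff h.
  exact: st1 _ _ Dy Ff (le_trans h (qn2 _ _ (D1 _ Dy) Ff)).
Qed.

End StrictQNE.

Section Weights.
Variables (R : realType) (V : normedModType R) (X : eqType).
Variables (s : seq X) (wt : X -> R).
Hypotheses (wt_ge0 : forall t, t \in s -> 0 <= wt t)
           (wt_sum : \sum_(t <- s) wt t = 1).

Lemma wsumrB (G : X -> V) v :
  \sum_(t <- s) wt t *: G t - v = \sum_(t <- s) wt t *: (G t - v).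
Proof.
rewrite -{1}(scale1r v) -wt_sum scaler_suml -sumrB.
by apply: eq_bigr => t _; rewrite scalerBr.
Qed.

Lemma norm_wsum_le (G : X -> V) :
  `|\sum_(t <- s) wt t *: G t| <= \sum_(t <- s) wt t * `|G t|.
Proof.
apply: le_trans (ler_norm_sum _ _ _) _.
rewrite big_seq [X in _ <= X]big_seq; apply: ler_sum => t ts.
by rewrite normrZ ger0_norm ?wt_ge0.
Qed.

Lemma wsum_le (a : X -> R) c :
  (forall t, t \in s -> a t <= c) -> \sum_(t <- s) wt t * a t <= c.
Proof.
move=> h; rewrite -[X in _ <= X]mul1r -wt_sum mulr_suml.
rewrite big_seq [X in _ <= X]big_seq; apply: ler_sum => t ts.
by apply: ler_wpM2l; [apply: wt_ge0|apply: h].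
Qed.

End Weights.

Lemma convex_wsum (R : realType) (V : normedModType R) (D : set V)
  (X : eqType) (s : seq X) (wt : X -> R) (P : X -> V) :
  convex_set_of D -> s <> [::] ->
  (forall t, t \in s -> 0 < wt t) -> (forall t, t \in s -> D (P t)) ->
  D ((\sum_(t <- s) wt t)^-1 *: \sum_(t <- s) wt t *: P t).
Proof.
move=> cvD; elim: s => [//|a s IH] _ hw hP; rewrite !big_cons.
have wa := hw a (mem_head _ _); have Pa := hP a (mem_head _ _).
case: s IH hw hP => [|b s] IH hw hP.
  by rewrite !big_nil !addr0 scalerA mulVf ?scale1r ?gt_eqF.
set c := \sum_(t <- b :: s) wt t; set S := \sum_(t <- b :: s) wt t *: P t.
have hw' t : t \in b :: s -> 0 < wt t by move=> ts; rewrite hw // in_cons ts orbT.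
have hP' t : t \in b :: s -> D (P t).
  by move=> ts; apply: hP; rewrite in_cons ts orbT.
have c0 : 0 < c.
  rewrite /c big_cons ltr_wpDr ?hw' ?mem_head // big_seq.
  by apply: sumr_ge0 => t ts; apply/ltW/hw'; rewrite in_cons ts orbT.
have s0 : 0 < wt a + c by rewrite ltr_wpDl // ltW.
have -> : (wt a + c)^-1 *: (wt a *: P a + S) =
    (wt a / (wt a + c)) *: P a + (1 - wt a / (wt a + c)) *: (c^-1 *: S).
  rewrite scalerDr !scalerA; congr (_ *: _ + _ *: _); first by rewrite mulrC.
  by field; rewrite !gt_eqF.
apply: cvD => //; first exact: IH.
apply/andP; split; first by rewrite divr_ge0 // ltW.
by rewrite ler_pdivrMr // mul1r lerDl ltW.
Qed.

Section StringOperators.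
Variables (R : realType) (V : normedModType R) (ip : V -> V -> R).
Hypothesis hip : is_inner_product ip.
Variables (D : set V) (m : nat) (T : 'I_m -> V -> V).
Hypothesis hT : forall i, firmly_nonexpansive ip D (T i).

Definition common_fix : set V := \bigcap_(i in [set: 'I_m]) Fix D (T i).

Lemma common_fixP y : common_fix y <-> forall i, D y /\ T i y = y.
Proof. by split => [h i|h i _]; [exact: (h i I)|exact: h]. Qed.

Lemma firm_D i y : D y -> D (T i y). Proof. by case: (hT i) => h _; apply: h. Qed.

(* Firmly nonexpansive maps are nonexpansive (Cauchy-Schwarz). *)
Lemma firm_nonexp i y y' : D y -> D y' -> `|T i y - T i y'| <= `|y - y'|.
Proof.
move=> Dy Dy'; case: (hT i) => _ /(_ _ _ Dy Dy') h.
have := cauchy_schwarz hip (y - y') (T i y - T i y').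
have := normr_ge0 (T i y - T i y'); have := normr_ge0 (y - y'); nra.
Qed.

(* ... and strictly quasi-nonexpansive: |T y - f|^2 + |y - T y|^2 <= |y - f|^2
   for f in Fix T_i. *)
Lemma firm_strict i y f : D y -> Fix D (T i) f ->
  `|T i y - f| <= `|y - f| /\ (`|y - f| <= `|T i y - f| -> T i y = y).
Proof.
move=> Dy [Df Tf]; case: (hT i) => _ /(_ _ _ Dy Df); rewrite Tf => h.
have := cauchy_schwarz hip (y - f) (T i y - f).
have := normr_ge0 (T i y - f); have := normr_ge0 (y - f) => h0 h1 hcs.
split=> [|hle]; first by nra.
have e : y - T i y = (y - f) - (T i y - f) by rewrite opprB addrA subrK.
have := normB2 hip (y - f) (T i y - f); rewrite -e => h2.
apply/esym/subr0_eq/normr0_eq0/eqP.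
by rewrite -sqrf_eq0 eq_le sqr_ge0 andbT; nra.
Qed.

Lemma string_op_rcons t i y : string_op T (rcons t i) y = T i (string_op T t y).
Proof. by rewrite /string_op foldl_rcons. Qed.

Lemma string_op_D t y : D y -> D (string_op T t y).
Proof.
by elim/last_ind: t => [//|t i IH] Dy; rewrite string_op_rcons; apply/firm_D/IH.
Qed.

Lemma string_op_nonexp t y y' : D y -> D y' ->
  `|string_op T t y - string_op T t y'| <= `|y - y'|.
Proof.
elim/last_ind: t => [//|t i IH] Dy Dy'; rewrite !string_op_rcons.
by apply: le_trans (IH Dy Dy'); apply: firm_nonexp; apply: string_op_D.
Qed.

Lemma string_op_fix t y : (forall i, i \in t -> T i y = y) -> string_op T t y = y.
Proof.
elim/last_ind: t => [//|t i IH] h; rewrite string_op_rcons IH.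
  by apply: h; rewrite mem_rcons mem_head.
by move=> j jt; apply: h; rewrite mem_rcons in_cons jt orbT.
Qed.

Lemma string_op_qne t y f : D y -> common_fix f ->
  `|string_op T t y - f| <= `|y - f| /\
  (`|y - f| <= `|string_op T t y - f| -> forall i, i \in t -> T i y = y).
Proof.
move=> Dy /common_fixP Ff; elim/last_ind: t => [|t i [IH1 IH2]]; first by split.
rewrite string_op_rcons.
have [h1 h2] := firm_strict (string_op_D t Dy) (Ff i).
split=> [|hle]; first exact: le_trans h1 IH1.
have fixt := IH2 (le_trans hle h1).
rewrite string_op_fix // in hle h2; have hi := h2 hle.
by move=> j; rewrite mem_rcons in_cons => /orP [/eqP ->|/fixt].
Qed.

Definition avg_op (Om : seq (seq 'I_m)) (wt : seq 'I_m -> R) (y : V) : V :=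
  \sum_(t <- Om) wt t *: string_op T t y.

Hypothesis cvD : convex_set_of D.

Section Averaged.
Variables (Om : seq (seq 'I_m)) (wt : seq 'I_m -> R).
Hypothesis hM : in_M Om wt.

Let w01 t : t \in Om -> 0 < wt t <= 1.
Proof. by case: hM => _ _ h _; apply: h. Qed.
Let w0 t : t \in Om -> 0 <= wt t. Proof. by move/w01/andP => [/ltW]. Qed.
Let wsum : \sum_(t <- Om) wt t = 1. Proof. by case: hM. Qed.

Lemma avg_op_D y : D y -> D (avg_op Om wt y).
Proof.
move=> Dy; have Om0 : Om <> [::].
  by move=> e; move: wsum; rewrite e big_nil => /eqP; rewrite eq_sym oner_eq0.
have := convex_wsum (wt := wt) (P := fun t => string_op T t y) cvD Om0.
rewrite wsum invr1 scale1r; apply; first by move=> t /w01 /andP[].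
by move=> t _; apply: string_op_D.
Qed.

Lemma avg_op_dist y f : `|avg_op Om wt y - f| <=
  \sum_(t <- Om) wt t * `|string_op T t y - f|.
Proof. by rewrite /avg_op (wsumrB (V := V) wsum); apply: norm_wsum_le. Qed.

(* Strictness: equality in the averaged quasi-nonexpansiveness forces every
   string, hence (by fitness) every T_i, to fix y. *)
Lemma avg_op_strict y f : D y -> common_fix f ->
  `|y - f| <= `|avg_op Om wt y - f| -> common_fix y.
Proof.
move=> Dy Ff hle; apply/common_fixP => i; split => //.
case: hM => uniqOm fit _ _; have [t0 t0O it0] := fit i.
have [_ h2] := string_op_qne t0 Dy Ff; apply: (h2 _ _ it0).
rewrite leNgt; apply/negP => hlt.
pose gap t := `|y - f| - `|string_op T t y - f|.
have : \sum_(t <- Om) wt t * gap t <= 0.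
  rewrite (eq_bigr (fun t => wt t * `|y - f| - wt t * `|string_op T t y - f|));
    last by move=> t _; rewrite mulrBr.
  by rewrite sumrB -mulr_suml wsum mul1r subr_le0 (le_trans hle) ?avg_op_dist.
rewrite (bigD1_seq t0) //= -/(gap t0).
have : 0 <= \sum_(t <- Om | t != t0) wt t * gap t.
  rewrite big_seq_cond; apply: sumr_ge0 => t /andP [ts _].
  by rewrite mulr_ge0 ?w0 // subr_ge0; case: (string_op_qne t Dy Ff).
have : 0 < wt t0 * gap t0 by rewrite mulr_gt0 ?subr_gt0 //; case/andP: (w01 t0O).
lra.
Qed.

Lemma avg_op_strict_qne : strict_qne D common_fix (avg_op Om wt).
Proof.
split; [exact: avg_op_D| | |exact: avg_op_strict].
- move=> y y' Dy Dy'; rewrite /avg_op -sumrB.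
  under eq_bigr => t _ do rewrite -scalerBr.
  apply: le_trans (norm_wsum_le w0 _) _; apply: (wsum_le w0 wsum) => t _.
  exact: string_op_nonexp.
- move=> y f Dy Ff; apply: le_trans (avg_op_dist _ _) _.
  by apply: (wsum_le w0 wsum) => t _; have [] := string_op_qne t Dy Ff.
Qed.

End Averaged.

End StringOperators.

Definition proj_vi (R : realType) (V : normedModType R) (ip : V -> V -> R)
  (F : set V) (u p : V) : Prop :=
  F p /\ forall f, F f -> ip (u - p) (f - p) <= 0.

Lemma proj_vi_metric (R : realType) (V : normedModType R) (ip : V -> V -> R)
  (F : set V) (u p : V) :
  is_inner_product ip -> proj_vi ip F u p -> is_metric_proj F u p.
Proof.
move=> hip [Fp vi]; split=> // y Fy.
have -> : u - y = (u - p) - (y - p) by rewrite opprB addrA subrK.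
rewrite -(ler_pXn2r (n := 2)) ?nnegrE // (normB2 hip (u - p)).
have := vi y Fy; have := sqr_ge0 `|y - p|; lra.
Qed.


Lemma contraction_fixed_point (R : realType) (V : completeNormedModType R)
  (D : set V) (G : V -> V) (q : R) :
  closed D -> D !=set0 -> (forall x, D x -> D (G x)) -> 0 <= q -> q < 1 ->
  (forall x y, D x -> D y -> `|G x - G y| <= q * `|x - y|) ->
  exists2 p, D p & p = G p.
Proof.
move=> cD D0 GD q0 q1 Gl.
have GD' : {homo G : x / D x >-> D x} by [].
have : is_contraction (mkfun_fun GD').
  by exists (NngNum q0); split => // -[a b] /= [Da Db]; apply: Gl.
by move=> /banach_fixed_point /(_ cD D0) [p Dp pG]; exists p.
Qed.

Definition curve_param (R : realType) (n : nat) : R := (n.+2%:R)^-1.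

Lemma curve_param_in01 (R : realType) n : 0 < curve_param R n < 1.
Proof. by rewrite invr_gt0 ltr0n /= invf_lt1 ?ltr0n // ltr1n. Qed.

Lemma curve_param_lt (R : realType) n n' :
  (n < n')%N -> curve_param R n' < curve_param R n.
Proof. by move=> nn; rewrite ltf_pV2 ?posrE ?ltr0n // ltr_nat ltnS. Qed.

Lemma curve_param_le_half (R : realType) n : curve_param R n <= 2^-1.
Proof. by rewrite lef_pV2 ?posrE ?ltr0n // ler_nat. Qed.

Lemma curve_param_cvg0 (R : realType) : curve_param R @ \oo --> 0.
Proof. by have := @cvg_harmonic R; rewrite -cvg_shiftS. Qed.

(* Browder's theorem for a strictly quasi-nonexpansive S: the curve
   z_t = t u + (1 - t) S z_t converges to P_F(u) as t -> 0. *)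
Section Browder.
Variables (R : realType) (V : completeNormedModType R) (ip : V -> V -> R).
Hypothesis hip : is_inner_product ip.
Variables (D F : set V) (S : V -> V) (u f0 : V).
Hypotheses (cD : closed D) (cvD : convex_set_of D) (hS : strict_qne D F S)
  (Du : D u) (Ff0 : F f0).

Let SD y : D y -> D (S y). Proof. by case: hS => h _ _ _; apply: h. Qed.
Let SNE y y' : D y -> D y' -> `|S y - S y'| <= `|y - y'|.
Proof. by case: hS => _ h _ _; apply: h. Qed.
Let SQN y f : D y -> F f -> `|S y - f| <= `|y - f|.
Proof. by case: hS => _ _ h _; apply: h. Qed.
Let SST y f : D y -> F f -> `|y - f| <= `|S y - f| -> F y.
Proof. by case: hS => _ _ _ h; apply: h. Qed.

Section ResolventPoint.
Variables (t : R) (z : V).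
Hypotheses (t01 : 0 < t < 1) (Dz : D z) (hz : z = t *: u + (1 - t) *: S z).

Lemma resolvent_residual : (1 - t) *: (z - S z) = t *: (u - z).
Proof.
have h1 : (1 - t) *: S z = z - t *: u by rewrite {2}hz [t *: u + _]addrC addrK.
by rewrite scalerBr h1 scalerBl scale1r opprB addrC addrA subrK -scalerBr.
Qed.

Lemma resolvent_ip v : (1 - t) * ip (z - S z) v = t * ip (u - z) v.
Proof. by rewrite -!(ipZl hip) resolvent_residual. Qed.

(* The quantitative form of "|S y - y| small implies <u - z, y - z> small". *)
Lemma resolvent_key y : D y -> t * ip (u - z) (y - z) <= `|S y - y| * `|z - y|.
Proof.
move=> Dy; have /andP [t0 t1] := t01.
have := ip_sub_ge0 hip (SNE Dz Dy).
rewrite subr_swap (ipBl hip) -(opprB z y) !(ipNr hip).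
have := resolvent_ip (z - y).
set A := ip (z - S z) _; set B := ip (y - S y) _ => hA hAB.
have hB : - B <= `|S y - y| * `|z - y|.
  have := abs_cauchy_schwarz hip (y - S y) (z - y); rewrite distrC.
  by apply: le_trans; rewrite -normrN ler_norm.
have K0 : 0 <= `|S y - y| * `|z - y| by rewrite mulr_ge0.
have : (1 - t) * (- B) <= `|S y - y| * `|z - y|.
  apply: le_trans (ler_wpM2l _ hB) _; first by rewrite subr_ge0 ltW.
  by rewrite ler_piMl // gerBl ltW.
have : 0 <= (1 - t) * (A - B) by apply: mulr_ge0 => //; rewrite subr_ge0 ltW.
lra.
Qed.

Lemma resolvent_vi f : F f -> 0 <= ip (u - z) (z - f).
Proof.
move=> Ff; have /andP [t0 t1] := t01.
have := ip_sub_ge0 hip (SQN Dz Ff); rewrite subr_swap subrr subr0 => h.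
have : 0 <= t * ip (u - z) (z - f).
  by rewrite -resolvent_ip mulr_ge0 // subr_ge0 ltW.
by rewrite pmulr_rge0.
Qed.

Lemma resolvent_bound f : F f -> `|u - z| <= `|u - f|.
Proof.
move=> Ff; have vi := resolvent_vi Ff.
have h : `|u - z| ^+ 2 = ip (u - z) (u - f) - ip (u - z) (z - f).
  by rewrite (ip_norm hip) -(ipBr hip) subr_swap subrr subr0.
have := cauchy_schwarz hip (u - z) (u - f).
have := normr_ge0 (u - z); have := normr_ge0 (u - f); nra.
Qed.

End ResolventPoint.

(* Along the curve, |u - z_t|^2 decreases with t, with the gap controlling
   |z_s - z_t|^2: this makes the curve Cauchy as t -> 0. *)
Lemma resolvent_mono (s t : R) zs zt : 0 < s -> s < t -> t < 1 -> D zs -> D zt ->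
  zs = s *: u + (1 - s) *: S zs -> zt = t *: u + (1 - t) *: S zt ->
  `|zs - zt| ^+ 2 <= `|u - zs| ^+ 2 - `|u - zt| ^+ 2.
Proof.
move=> s0 st t1 Dzs Dzt hzs hzt.
set d := zs - zt.
have mono := ip_sub_ge0 hip (SNE Dzs Dzt); rewrite -/d in mono.
rewrite {1}/d subr_swap (ipBl hip) in mono.
have ea : u - zs = (u - zt) - d by rewrite /d opprB addrA subrK.
have hab : ip (u - zs) d = ip (u - zt) d - `|d| ^+ 2.
  by rewrite ea (ipBl hip) (ip_norm hip).
(* monotonicity of I - S, rescaled by the resolvent equations *)
have hb : ip (u - zt) d <= 0.
  set A := ip (zs - _) d in mono; set B := ip (zt - _) d in mono.
  have s1 : s < 1 := lt_trans st t1.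
  have : 0 <= (1 - s) * (1 - t) * (A - B).
    by apply: mulr_ge0 => //; rewrite mulr_ge0 // subr_ge0 ltW.
  have -> : (1 - s) * (1 - t) * (A - B) =
      (1 - t) * ((1 - s) * A) - (1 - s) * ((1 - t) * B) by ring.
  rewrite (resolvent_ip hzs) (resolvent_ip hzt) hab.
  have : 0 <= (1 - t) * s * `|d| ^+ 2.
    by rewrite mulr_ge0 ?sqr_ge0 ?mulr_ge0 ?subr_ge0 ?(ltW s0) ?(ltW t1).
  nra.
rewrite ea (normB2 hip (u - zt) d); lra.
Qed.

Lemma resolvent_exists n : exists z,
  D z /\ z = curve_param R n *: u + (1 - curve_param R n) *: S z.
Proof.
have /andP [t0 t1] := curve_param_in01 R n; set t := curve_param R n.
have [z Dz hz] : exists2 z, D z & z = (fun y => t *: u + (1 - t) *: S y) z.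
  apply: (contraction_fixed_point (q := 1 - t)) => //.
  - by exists u.
  - by move=> y Dy; apply: cvD => //; [apply: SD|rewrite !ltW].
  - by rewrite subr_ge0 ltW.
  - by rewrite ltrBlDl ltrDr.
  move=> y y' Dy Dy'; rewrite opprD addrACA subrr add0r -scalerBr normrZ.
  rewrite ger0_norm; last by rewrite subr_ge0 ltW.
  by apply: ler_wpM2l; [rewrite subr_ge0 ltW|apply: SNE].
by exists z.
Qed.

Let curve n : V := sval (cid (resolvent_exists n)).

Let curve_D n : D (curve n).
Proof. by case: (svalP (cid (resolvent_exists n))). Qed.

Let curve_eq n :
  curve n = curve_param R n *: u + (1 - curve_param R n) *: S (curve n).
Proof. by case: (svalP (cid (resolvent_exists n))). Qed.

Let curve_bound n : `|u - curve n| <= `|u - f0|.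
Proof.
exact: (resolvent_bound (curve_param_in01 R n) (curve_D n) (curve_eq n) Ff0).
Qed.

(* |u - z_n|^2 is nondecreasing and bounded, and controls |z_n' - z_n|^2:
   the curve is Cauchy. *)
Lemma curve_cvg : cvgn curve.
Proof.
pose X n := `|u - curve n| ^+ 2.
have gap n n' : (n < n')%N -> `|curve n' - curve n| ^+ 2 <= X n' - X n.
  move=> nn'; have /andP [a0 a1] := curve_param_in01 R n'.
  have /andP [b0 b1] := curve_param_in01 R n.
  exact: resolvent_mono a0 (curve_param_lt _ nn') b1 (curve_D _) (curve_D _)
    (curve_eq _) (curve_eq _).
have Xnd : nondecreasing_seq X.
  move=> n n'; rewrite leq_eqVlt => /orP [/eqP -> //|nn'].
  by have := gap _ _ nn'; have := sqr_ge0 `|curve n' - curve n|; lra.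
have Xub : has_ubound (range X).
  exists (`|u - f0| ^+ 2) => _ [n _ <-].
  by rewrite ler_pXn2r ?nnegrE ?curve_bound.
have cX := nondecreasing_is_cvgn Xnd Xub.
have XL n : X n <= limn X := nondecreasing_cvgn_le Xnd cX n.
have [p hp] : exists p : V, curve @ \oo --> p.
  apply: cauchy_seq_cvg => e e0.
  have [K hK] := cvg_eventually_le cX (mulr_gt0 e0 e0).
  exists K => n; rewrite leq_eqVlt => /orP [/eqP <-|Kn].
    by rewrite subrr normr0 ltW.
  have h : `|curve K - curve n| ^+ 2 <= e * e.
    rewrite distrC; apply: le_trans (gap _ _ Kn) _.
    have := hK K (leqnn K); rewrite distrC => h.
    have := XL n; have := ler_norm (limn X - X K); lra.
  by rewrite -(ler_pXn2r (n := 2)) ?nnegrE ?(ltW e0) // [X in _ <= X]expr2.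
exact: cvgP hp.
Qed.

Let p := limn curve.

Let curve_to_p : curve @ \oo --> p. Proof. exact: curve_cvg. Qed.

Let curve_limit_D : D p.
Proof. by apply: (closed_cvg D cD _ p curve_to_p); apply: nearW. Qed.

(* |z_n - S z_n| = t_n / (1 - t_n) |u - z_n| <= 2 t_n |u - f0|. *)
Lemma curve_residual n :
  `|curve n - S (curve n)| <= 2 * curve_param R n * `|u - f0|.
Proof.
have /andP [t0 t1] := curve_param_in01 R n.
have := congr1 (fun v : V => `|v|) (resolvent_residual (curve_eq n)).
have t1' : 0 <= 1 - curve_param R n by rewrite subr_ge0 ltW.
rewrite !normrZ (ger0_norm (ltW t0)) (ger0_norm t1') => h.
have := curve_param_le_half R n; have := curve_bound n.
have := normr_ge0 (curve n - S (curve n)); nra.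
Qed.

(* The limit is a fixed point of S, since |z_n - S z_n| -> 0. *)
Lemma curve_limit_fixed : S p = p.
Proof.
apply/eqP; rewrite -subr_eq0 -normr_eq0 eq_le normr_ge0 andbT.
apply/ler_addgt0Pr => e e0; rewrite add0r.
have C0 : 0 < `|u - f0| + 1 := ltr_wpDl (normr_ge0 _) ltr01.
have e4 : 0 < e / 4 by rewrite divr_gt0.
have [K1 hK1] := cvg_eventually_le curve_to_p e4.
have [K2 hK2] := cvg_eventually_le (@curve_param_cvg0 R) (divr_gt0 e4 C0).
pose n := maxn K1 K2; have /andP [t0 _] := curve_param_in01 R n.
have hz := hK1 n (leq_maxl _ _).
have ht : curve_param R n * `|u - f0| <= e / 4.
  have := hK2 n (leq_maxr _ _); rewrite subr0 (ger0_norm (ltW t0)) ler_pdivlMr //.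
  by apply: le_trans; apply: ler_wpM2l; [apply: ltW|rewrite lerDl].
have tri : `|S p - p| <=
    `|S p - S (curve n)| + `|S (curve n) - curve n| + `|curve n - p|.
  by apply: le_trans (ler_distD (curve n) _ _) _; rewrite lerD2r ler_distD.
have := curve_residual n; have := SNE curve_limit_D (curve_D n).
rewrite (distrC (S (curve n))) in tri; rewrite (distrC p); lra.
Qed.


(* By strictness p lies in F, and passing to the limit in resolvent_vi gives
   the variational inequality. *)
Lemma curve_limit_vi : proj_vi ip F u p.
Proof.
split=> [|f Ff].
  by apply: SST curve_limit_D Ff0 _; rewrite curve_limit_fixed.
apply/ler_addgt0Pr => e e0; rewrite add0r.
set L := `|f - p| + `|u - f0| + 1.
have L0 : 0 < L by rewrite ltr_wpDl ?addr_ge0.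
have [K hK] := cvg_eventually_le curve_to_p (divr_gt0 e0 L0).
have := ip_shift_le hip u f p (curve K).
have := resolvent_vi (curve_param_in01 R K) (curve_D K) (curve_eq K) Ff.
rewrite -(opprB f (curve K)) (ipNr hip).
have := hK K (leqnn K); rewrite ler_pdivlMr // => hz.
have := curve_bound K; have := normr_ge0 (curve K - p); rewrite /L in hz *; nra.
Qed.

Lemma browder_exists : exists q, proj_vi ip F u q.
Proof. by exists p; apply: curve_limit_vi. Qed.

(* The form in which the curve is used for the iteration: if y is bounded and
   |S y - y| is small enough, then <u - P_F(u), y - P_F(u)> is small. *)
Lemma browder_approx q : proj_vi ip F u q ->
  forall e B, 0 < e -> 0 <= B -> exists2 delta, 0 < delta &
    forall y, D y -> `|y - u| <= B -> `|S y - y| <= delta ->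
      ip (u - q) (y - q) <= e.
Proof.
move=> [Fq viq] e B e0 B0.
have [Fp vip] := curve_limit_vi.
have <- : p = q by apply: (vi_unique hip); [apply: vip|apply: viq].
set C := `|u - f0|; have C0 : 0 <= C := normr_ge0 _.
set L := B + `|u - p| + C + 1.
have L0 : 0 < L by rewrite ltr_wpDl ?addr_ge0.
have L20 : 0 < 2 * L by rewrite mulr_gt0.
have [n hn] := cvg_eventually_le curve_to_p (divr_gt0 e0 L20).
have /andP [t0 t1] := curve_param_in01 R n.
set t := curve_param R n in t0 t1; set z := curve n.
have hz : `|z - p| * (2 * L) <= e by rewrite -ler_pdivlMr ?hn.
have M0 : 0 < 2 * (C + B + 1) by rewrite mulr_gt0 ?ltr_wpDl ?addr_ge0.
exists (e * t / (2 * (C + B + 1))) => [|y Dy hyu hres].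
  by rewrite divr_gt0 // mulr_gt0.
have hzy : `|z - y| <= C + B.
  apply: le_trans (ler_distD u z y) _; rewrite distrC (distrC u y).
  by apply: lerD; [apply: curve_bound|].
have key := resolvent_key (curve_param_in01 R n) (curve_D n) (curve_eq n) Dy.
have hfar : ip (u - z) (y - z) <= e / 2.
  rewrite -(ler_pM2l t0); apply: le_trans key _.
  apply: le_trans (ler_pM (normr_ge0 _) (normr_ge0 _) hres hzy) _.
  have CB0 : 0 < C + B + 1 by rewrite ltr_wpDl ?addr_ge0.
  have -> : t * (e / 2) = e * t / (2 * (C + B + 1)) * (C + B + 1).
    by field; rewrite gt_eqF.
  by rewrite ler_wpM2l ?lerDl // divr_ge0 ?mulr_ge0 ?ltW.
have := ip_shift_le hip u y p z.
have hyp : `|y - p| <= B + `|u - p|.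
  by apply: le_trans (ler_distD u y p) _; rewrite lerD2r.
have := curve_bound n; rewrite -/z -/C => hb.
have := normr_ge0 (z - p); rewrite /L in hz; nra.
Qed.

End Browder.




Section CyclicHalpern.
Variables (R : realType) (V : completeNormedModType R) (ip : V -> V -> R).
Hypothesis hip : is_inner_product ip.
Variables (D F : set V) (f0 u : V) (N : nat) (W : nat -> V -> V).
Variables (lam : nat -> R) (x : nat -> V).
Hypotheses (cD : closed D) (cvD : convex_set_of D) (Ff0 : F f0) (Du : D u).
Hypotheses (N0 : (0 < N)%N) (hW : forall k, strict_qne D F (W k))
  (Wper : forall k, W (k + N)%N = W k).
Hypotheses (hlam : steering lam) (Dx0 : D (x 0%N))
  (xrec : forall k, x k.+1 = lam k *: u + (1 - lam k) *: W k (x k)).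

Let WD k y : D y -> D (W k y). Proof. by case: (hW k) => h _ _ _; apply: h. Qed.
Let WNE k y y' : D y -> D y' -> `|W k y - W k y'| <= `|y - y'|.
Proof. by case: (hW k) => _ h _ _; apply: h. Qed.
Let WQN k y f : D y -> F f -> `|W k y - f| <= `|y - f|.
Proof. by case: (hW k) => _ _ h _; apply: h. Qed.
Let lam01 k : 0 <= lam k <= 1. Proof. by case: hlam. Qed.

Lemma iter_D k : D (x k).
Proof.
by elim: k => [//|k IH]; rewrite xrec; apply: cvD; [|apply: WD|apply: lam01].
Qed.

Let B := `|u - f0| + `|x 0%N - f0|.
Let M := `|u - f0| + B.

Lemma iter_bound k : `|x k - f0| <= B.
Proof.
elim: k => [|k IH]; first by rewrite lerDr.
have /andP [l0 l1] := lam01 k.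
rewrite xrec -lin_comb; apply: le_trans (ler_normD _ _) _.
rewrite !normrZ (ger0_norm l0) ger0_norm ?subr_ge0 //.
have := WQN k (iter_D k) Ff0; have : `|u - f0| <= B by rewrite lerDl.
have := normr_ge0 (W k (x k) - f0); nra.
Qed.

Lemma step_bound k : `|u - W k (x k)| <= M.
Proof.
apply: le_trans (ler_distD f0 _ _) _; rewrite lerD2l distrC.
exact: le_trans (WQN k (iter_D k) Ff0) (iter_bound k).
Qed.

Let M_ge0 : 0 <= M. Proof. by rewrite !addr_ge0. Qed.

Lemma shifted_step k : `|x (k + N).+1 - x k.+1| <=
  (1 - lam (k + N)%N) * `|x (k + N)%N - x k| + `|lam (k + N)%N - lam k| * M.
Proof.
rewrite !xrec Wper.
set A := W k (x (k + N)%N); set Bk := W k (x k).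
set l' := lam (k + N)%N; set l := lam k.
have -> : l' *: u + (1 - l') *: A - (l *: u + (1 - l) *: Bk) =
   (l' *: u + (1 - l') *: A - (l' *: u + (1 - l') *: Bk)) +
   (l' *: u + (1 - l') *: Bk - (l *: u + (1 - l) *: Bk)) by rewrite addrA subrK.
rewrite lincomb_same lincomb_diff.
apply: le_trans (ler_normD _ _) _; rewrite !normrZ.
have /andP [l0 l1] := lam01 (k + N)%N.
rewrite ger0_norm ?subr_ge0 //; apply: lerD.
  by apply: ler_wpM2l; [rewrite subr_ge0|apply: WNE; apply: iter_D].
by apply: ler_wpM2l => //; apply: step_bound.
Qed.

(* sum_k |lam_(k+N) - lam_k| is dominated by N times the total variation. *)
Lemma shifted_variation_tail e : 0 < e -> exists K, forall m n, (K <= m)%N ->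
  \sum_(m <= k < n) `|lam (k + N)%N - lam k| * M <= e.
Proof.
move=> e0; have [_ _ _ lvar] := hlam.
set dl := fun k => `|lam k.+1 - lam k|.
have NM0 : 0 < N%:R * M + 1 by rewrite ltr_wpDl ?mulr_ge0.
set q := e / (N%:R * M + 1).
have [K hK] := cvg_series_tail (fun k => normr_ge0 _) lvar (divr_gt0 e0 NM0).
exists K => m n Km.
apply: le_trans (_ : \sum_(m <= k < n) (\sum_(i < N) dl (k + i)%N) * M <= _).
  by apply: ler_sum => k _; apply: ler_wpM2r => //; apply: telescope_le.
rewrite -mulr_suml exchange_big /=.
apply: le_trans (_ : (N%:R * q) * M <= _).
  apply: ler_wpM2r => //; apply: sum_ord_le => i.
  have := hK (m + i)%N (n + i)%N (leq_trans Km (leq_addr _ _)).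
  by rewrite big_addn addnK.
have hq : q * (N%:R * M + 1) = e by rewrite /q divfK // gt_eqF.
have q0 : 0 <= q by rewrite /q divr_ge0 // ltW.
rewrite -[X in _ <= X]hq; have := ler0n R N; nra.
Qed.

Lemma asymptotic_regularity e : 0 < e ->
  exists K, forall k, (K <= k)%N -> `|x (k + N)%N - x k| <= e.
Proof.
have [_ _ ldiv _] := hlam.
apply: (xu_lemma (a := fun k => `|x (k + N)%N - x k|)
   (g := fun k => lam (k + N)%N) (d := fun _ => 0)
   (b := fun k => `|lam (k + N)%N - lam k| * M)) => //.
- move=> K M'; have [i hi] := divergent_series_block ldiv (K + N)%N M'.
  by exists i; move: hi; rewrite big_addn (_ : (K + N + i - N = K + i)%N) //; lia.
- by move=> e' e'0; exists 0%N => k _; apply: ltW.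
- by move=> k; apply: mulr_ge0.
- exact: shifted_variation_tail.
- by move=> k; rewrite mulr0 addr0 addSn; apply: shifted_step.
Qed.

Fixpoint cycle_op (k n : nat) (y : V) : V :=
  if n is n'.+1 then W (k + n') (cycle_op k n' y) else y.

Lemma cycle_op_D k n y : D y -> D (cycle_op k n y).
Proof. by elim: n => [//|n IH] Dy /=; apply/WD/IH. Qed.

Lemma cycle_op_strict_qne k n : strict_qne D F (cycle_op k n.+1).
Proof. by elim: n => [|n IH]; [apply: hW|apply: strict_qne_comp IH (hW _)]. Qed.

Lemma cycle_op_mod k n : cycle_op (k %% N) n = cycle_op k n.
Proof.
have Wq q j : W (j + q * N)%N = W j.
  elim: q => [|q IH]; first by rewrite mul0n addn0.
  by rewrite mulSn addnCA addnC Wper.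
apply: funext => y; elim: n => [//|n IH] /=; rewrite IH.
have -> : (k + n = k %% N + n + k %/ N * N)%N.
  by rewrite addnAC [(k %% N + _)%N]addnC -divn_eq.
by rewrite Wq.
Qed.

Lemma orbit_vs_cycle k n :
  `|x (k + n)%N - cycle_op k n (x k)| <= M * \sum_(i < n) lam (k + i)%N.
Proof.
elim: n => [|n IH]; first by rewrite addn0 subrr normr0 big_ord0 mulr0.
rewrite big_ord_recr /= addnS xrec.
set l := lam (k + n)%N; set A := W (k + n)%N (x (k + n)%N).
set C := W (k + n)%N (cycle_op k n (x k)).
have -> : l *: u + (1 - l) *: A - C = (l *: u + (1 - l) *: A - A) + (A - C).
  by rewrite addrA subrK.
rewrite -lin_comb subrr scaler0 addr0.
apply: le_trans (ler_normD _ _) _; rewrite normrZ mulrDr addrC.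
have /andP [l0 _] := lam01 (k + n)%N.
rewrite ger0_norm //; apply: lerD.
  apply: le_trans IH; apply: WNE; [apply: iter_D|apply/cycle_op_D/iter_D].
by rewrite mulrC; apply: ler_wpM2r => //; apply: step_bound.
Qed.

Lemma cycle_residual e : 0 < e ->
  exists K, forall k, (K <= k)%N -> `|x k - cycle_op k N (x k)| <= e.
Proof.
move=> e0; have [_ lam0 _ _] := hlam.
have e20 : 0 < e / 2 by rewrite divr_gt0.
have [K1 hK1] := asymptotic_regularity e20.
have NM0 : 0 < N%:R * M + 1 by rewrite ltr_wpDl ?mulr_ge0.
set q := e / 2 / (N%:R * M + 1).
have [K2 hK2] := cvg_eventually_le lam0 (divr_gt0 e20 NM0).
exists (maxn K1 K2) => k hk.
have hs : \sum_(i < N) lam (k + i)%N <= N%:R * q.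
  apply: sum_ord_le => i; apply: le_trans (ler_norm _) _.
  rewrite -(subr0 (lam _)); apply: hK2.
  by apply: leq_trans (leq_trans (leq_maxr _ _) hk) (leq_addr _ _).
have hq : q * (N%:R * M + 1) = e / 2 by rewrite /q divfK // gt_eqF.
have q0 : 0 <= q by rewrite /q divr_ge0 // ltW.
have h1 := hK1 k (leq_trans (leq_maxl _ _) hk); rewrite distrC in h1.
have tri := ler_distD (x (k + N)%N) (x k) (cycle_op k N (x k)).
have h2 := orbit_vs_cycle k N.
have : M * \sum_(i < N) lam (k + i)%N <= M * (N%:R * q) by apply: ler_wpM2l.
have := ler0n R N; nra.
Qed.

Let cycle_strict r : strict_qne D F (cycle_op r N).
Proof. by rewrite -(prednK N0); apply: cycle_op_strict_qne. Qed.

(* limsup_k <u - P_F(u), x_k - P_F(u)> <= 0: each residue class k = r mod N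
   is handled by Browder's curve for the cycle operator starting at r. *)
Lemma limsup_vi q : proj_vi ip F u q ->
  forall e, 0 < e -> exists K, forall k, (K <= k)%N -> ip (u - q) (x k - q) <= e.
Proof.
move=> viq e e0.
have B0 : 0 <= B + `|u - f0| by rewrite !addr_ge0.
have xu k : `|x k - u| <= B + `|u - f0|.
  apply: le_trans (ler_distD f0 _ _) _; rewrite (distrC f0 u) lerD2r.
  exact: iter_bound.
pose P r K := forall k, (K <= k)%N -> (k %% N)%N = r -> ip (u - q) (x k - q) <= e.
have [K hK] : exists K, forall r, (r < N)%N -> P r K.
  apply: eventually_uniform => [r K K' KK' h k K'k|r rN].
    by apply: h; apply: leq_trans K'k.
  have [delta d0 hd] :=
    browder_approx hip cD cvD (cycle_strict r) Du Ff0 viq e0 B0.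
  have [K hK] := cycle_residual d0.
  exists K => k Kk kr; apply: hd; [apply: iter_D|apply: xu|].
  by rewrite -kr cycle_op_mod distrC; apply: hK.
by exists K => k Kk; apply: hK (ltn_pmod k N0) _ Kk _.
Qed.

(* Strong convergence of the iteration to P_F(u): Xu's lemma applied to
   |x_k - p|^2, whose recursion comes from one Halpern step. *)
Theorem cyclic_halpern_cvg : exists p, proj_vi ip F u p /\ x @ \oo --> p.
Proof.
have [p vip] := browder_exists hip cD cvD (cycle_strict 0) Du Ff0.
exists p; split => //; have [Fp _] := vip; have [_ _ ldiv _] := hlam.
have hsq : forall e, 0 < e ->
    exists K, forall k, (K <= k)%N -> `|x k - p| ^+ 2 <= e.
  apply: (xu_lemma (a := fun k => `|x k - p| ^+ 2) (g := lam)
    (d := fun k => 2 * ip (u - p) (x k.+1 - p)) (b := fun => 0)) => //.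
  - exact: divergent_series_block ldiv.
  - move=> e e0; have [K hK] := limsup_vi vip (divr_gt0 e0 (ltr0Sn _ 1)).
    by exists K => k Kk; have := hK k.+1 (leq_trans Kk (leqnSn _)); lra.
  - by move=> e e0; exists 0%N => m n _; rewrite big1 // ltW.
  - move=> k; rewrite addr0 xrec.
    exact (halpern_step hip u (lam01 k) (WQN k (iter_D k) Fp)).
apply: eventually_le_cvg => e e0; have [K hK] := hsq (e * e) (mulr_gt0 e0 e0).
exists K => n Kn; rewrite -(ler_pXn2r (n := 2)) ?nnegrE ?(ltW e0) //.
by rewrite [X in _ <= X]expr2; apply: hK.
Qed.

End CyclicHalpern.

Theorem theorem4 (R : realType) (V : completeNormedModType R)
  (ip : V -> V -> R) (D : set V) (m : nat) (T : 'I_m -> V -> V)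
  (N : nat) (Omega : nat -> seq (seq 'I_m)) (w : nat -> seq 'I_m -> R)
  (lam : nat -> R) (u x0 : V) (x : nat -> V) :
  is_inner_product ip ->
  D !=set0 -> closed D -> convex_set_of D ->
  (forall i, firmly_nonexpansive ip D (T i)) ->
  (\bigcap_(i in [set: 'I_m]) Fix D (T i)) !=set0 ->
  (0 < N)%N ->
  (forall r, (r < N)%N -> in_M (Omega r) (w r)) ->
  steering lam ->
  D u -> D x0 ->
  x 0%N = x0 ->
  (forall k : nat, x k.+1 =
     lam k *: u + (1 - lam k) *:
       \sum_(t <- Omega (k %% N)%N) w (k %% N)%N t *: string_op T t (x k)) ->
  exists p, is_metric_proj (\bigcap_(i in [set: 'I_m]) Fix D (T i)) u p
            /\ x @ \oo --> p.
Proof.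
move=> hip _ cD cvD hT [f0 Ff0] N0 hM hlam Du Dx0 hx0 hrec.
pose W k := avg_op T (Omega (k %% N)%N) (w (k %% N)%N).
have hW k : strict_qne D (common_fix D T) (W k).
  exact: (avg_op_strict_qne hip hT cvD (hM _ (ltn_pmod k N0))).
have Wper k : W (k + N)%N = W k by rewrite /W modnDr.
rewrite -hx0 in Dx0.
have [p [vip cvx]] :=
  cyclic_halpern_cvg hip cD cvD Ff0 Du N0 hW Wper hlam Dx0 hrec.
by exists p; split => //; exact: (proj_vi_metric hip vip).
Qed.
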